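(* Let $m$ and $n$ be relatively prime positive integers such that every solvable group of order $mn$ has a normal subgroup of order $m$. Then every left brace of size $mn$ is (isomorphic to) a semidirect product $B_1\rtimes_{\tau} B_2$ of a left brace $B_1$ of size $m$ and a left brace $B_2$ of size $n$, for some group morphism $\tau:(B_2,\cdot)\to\operatorname{Aut}(B_1,+,\cdot)$.
   Context: A (left) brace is a triple $(B,+,\cdot)$ where $(B,+)$ is an abelian group, $(B,\cdot)$ is a group, and $a\cdot(b+c)+a=a\cdot b+a\cdot c$ for all $a,b,c\in B$. Its size is $|B|$. A brace morphism is a map preserving both operations; an isomorphism is a bijective brace morphism. $\operatorname{Aut}(B_1,+,\cdot)$ denotes the group of brace automorphisms of $B_1$. Given braces $B_1,B_2$ and a group morphism $\tau:(B_2,\cdot)\to\operatorname{Aut}(B_1,+,\cdot)$, the semidirect product $B_1\rtimes_\tau B_2$ is the set $B_1\times B_2$ with $(a,b)+(a',b')=(a+a',b+b')$ and $(a,b)\cdot(a',b')=(a\cdot\tau(b)(a'),\,b\cdot b')$; it is a brace. When $\tau$ is trivial it is called the direct product. *)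

From HB Require Import structures.
From mathcomp Require Import all_boot all_fingroup all_solvable.
Set Implicit Arguments. Unset Strict Implicit. Unset Printing Implicit Defensive.

Definition is_abelian_group (T : Type) (add : T -> T -> T) : Prop :=
  (forall a b c, add a (add b c) = add (add a b) c) /\
  (forall a b, add a b = add b a) /\
  exists z : T, (forall a, add z a = a /\ add a z = a) /\
                (forall a, exists b, add a b = z /\ add b a = z).

Definition is_group (T : Type) (mul : T -> T -> T) : Prop :=
  (forall a b c, mul a (mul b c) = mul (mul a b) c) /\
  exists e : T, (forall a, mul e a = a /\ mul a e = a) /\
                (forall a, exists b, mul a b = e /\ mul b a = e).

Definition is_brace (T : Type) (add mul : T -> T -> T) : Prop :=
  [/\ is_abelian_group add, is_group mul &
      forall a b c, add (mul a (add b c)) a = add (mul a b) (mul a c)].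

Record brace := Brace {
  bcar : finType;
  badd : bcar -> bcar -> bcar;
  bmul : bcar -> bcar -> bcar;
  bax : is_brace badd bmul }.

Definition is_brace_aut (B : brace) (f : bcar B -> bcar B) : Prop :=
  bijective f /\
  (forall a b, f (badd a b) = badd (f a) (f b)) /\
  (forall a b, f (bmul a b) = bmul (f a) (f b)).

Definition is_brace_action (B1 B2 : brace) (tau : bcar B2 -> bcar B1 -> bcar B1) : Prop :=
  (forall b, is_brace_aut (tau b)) /\
  (forall b b' x, tau (bmul b b') x = tau b (tau b' x)).

Definition sd_add (B1 B2 : brace) (p q : bcar B1 * bcar B2) : bcar B1 * bcar B2 :=
  (badd p.1 q.1, badd p.2 q.2).
Definition sd_mul (B1 B2 : brace) (tau : bcar B2 -> bcar B1 -> bcar B1)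
  (p q : bcar B1 * bcar B2) : bcar B1 * bcar B2 :=
  (bmul p.1 (tau p.2 q.1), bmul p.2 q.2).

Definition is_sd_iso (B B1 B2 : brace) (tau : bcar B2 -> bcar B1 -> bcar B1)
  (f : bcar B -> bcar B1 * bcar B2) : Prop :=
  bijective f /\
  (forall a b, f (badd a b) = sd_add (f a) (f b)) /\
  (forall a b, f (bmul a b) = sd_mul tau (f a) (f b)).

From HB Require Import structures.
From mathcomp Require Import all_boot all_fingroup all_solvable.
From mathcomp Require Import ssralg finalg zmodp.
Set Implicit Arguments. Unset Strict Implicit. Unset Printing Implicit Defensive.
Import GRing.Theory FinRing.Theory.

(* Let A_m and A_n be the Hall pi(m)- and pi(m)'-subgroups of (B,+).  Each
   lambda_a : x |-> a.x - a is an additive automorphism, so it preserves both;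
   hence they are sub-braces of sizes m and n, and B = A_m + A_n additively.
   The heart of the proof is that lambda_a fixes A_n pointwise for a in A_m:
   the translations by A_n form a group T of order n normalised by lambda_a,
   whose order divides m; padding <lambda_a> to a group K of order m yields a
   solvable group T K of order mn, and its normal subgroup of order m is a
   normal Hall subgroup, which contains lambda_a and centralises T.  It follows
   that a.b = a + b for a in A_m, b in A_n, and that lambda_b acts on A_m as
   conjugation by b; so a + b |-> (a, b) is an isomorphism from B onto the
   semidirect product of A_m and A_n with action b |-> lambda_b. *)

Section GroupOfAxioms.
Variables (T : finType) (op : T -> T -> T).
Hypothesis opG : is_group op.

Lemma unit_exists : exists e, [forall a, op e a == a].
Proof.
have [_ [e [eP _]]] := opG.
by exists e; apply/forallP => a; rewrite (eP a).1.
Qed.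

Definition group_unit : T := xchoose unit_exists.

Lemma op_unit a : op group_unit a = a.
Proof. exact/eqP/(forallP (xchooseP unit_exists)). Qed.

Lemma inverse_exists a : exists b, op b a == group_unit.
Proof.
have [_ [e [eP invP]]] := opG.
have <- : e = group_unit by rewrite -[RHS](eP _).2 op_unit.
by have [b [_ baE]] := invP a; exists b; rewrite baE.
Qed.

Definition group_inv (a : T) : T := xchoose (inverse_exists a).

Lemma op_inv a : op (group_inv a) a = group_unit.
Proof. exact/eqP/(xchooseP (inverse_exists a)). Qed.

End GroupOfAxioms.

Section BraceAxioms.
Variable B : brace.

Lemma brace_addA : associative (@badd B).
Proof. by case: (bax B) => [[]]. Qed.

Lemma brace_addC : commutative (@badd B).
Proof. by case: (bax B) => [[_ []]]. Qed.

Lemma brace_add_group : is_group (@badd B).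
Proof. by case: (bax B) => [[addA [_ unitP]] _ _]; split. Qed.

Lemma brace_mul_group : is_group (@bmul B).
Proof. by case: (bax B). Qed.

Lemma brace_mulA : associative (@bmul B).
Proof. exact: brace_mul_group.1. Qed.

Lemma brace_distr (a b c : bcar B) :
  badd (bmul a (badd b c)) a = badd (bmul a b) (bmul a c).
Proof. by case: (bax B) => _ _. Qed.

End BraceAxioms.

(* Two copies of the carrier: addT B carries (B,+) as a zmodType (and hence
   as a finGroupType), mulT B carries (B,.) as a finGroupType. *)
Definition addT (B : brace) : Type := bcar B.
Definition mulT (B : brace) : Type := bcar B.
HB.instance Definition _ (B : brace) := Finite.on (addT B).
HB.instance Definition _ (B : brace) := Finite.on (mulT B).
HB.instance Definition _ (B : brace) :=
  GRing.isZmodule.Build (addT B) (@brace_addA B) (@brace_addC B)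
    (op_unit (brace_add_group B)) (op_inv (brace_add_group B)).
HB.instance Definition _ (B : brace) := [finGroupMixin of addT B for +%R].
HB.instance Definition _ (B : brace) :=
  Finite_isGroup.Build (mulT B) (@brace_mulA B)
    (op_unit (brace_mul_group B)) (op_inv (brace_mul_group B)).

Lemma groupD (B : brace) (S : {group addT B}) (u v : addT B) :
  u \in S -> v \in S -> (u + v)%R \in S.
Proof. exact: groupM. Qed.

Definition circ (B : brace) (a b : addT B) : addT B := bmul a b.
Definition cinv (B : brace) (a : addT B) : addT B := ((a : mulT B)^-1)%g.

Section Lambda.
Variable B : brace.
Local Notation A := (addT B).
Local Open Scope ring_scope.
Implicit Types a b x y : A.

Lemma circA : associative (@circ B).
Proof. exact: brace_mulA. Qed.

Lemma circ_distr a x y : circ a (x + y) + a = circ a x + circ a y.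
Proof. exact: brace_distr. Qed.

Lemma circx0 a : circ a 0 = a.
Proof. by apply: (@addrI _ (circ a 0)); rewrite -circ_distr addr0. Qed.

Lemma brace1gE : (1%g : mulT B) = 0 :> A.
Proof. by rewrite -[LHS]circx0; exact: (@mul1g (mulT B)). Qed.

Lemma circ0x a : circ 0 a = a.
Proof. by rewrite -brace1gE; exact: (@mul1g (mulT B)). Qed.

Lemma circVx a : circ (cinv a) a = 0.
Proof. by rewrite -brace1gE; exact: (@mulVg (mulT B)). Qed.

Lemma circxV a : circ a (cinv a) = 0.
Proof. by rewrite -brace1gE; exact: (@mulgV (mulT B)). Qed.

Lemma circVK x b : circ (circ x (cinv b)) b = x.
Proof. by rewrite -circA circVx circx0. Qed.

Definition lam a x : A := circ a x - a.

Lemma circE a x : circ a x = a + lam a x.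
Proof. by rewrite addrC subrK. Qed.

Lemma lam_nmod_morphism a : nmod_morphism (lam a).
Proof.
split=> [|x y]; first by rewrite /lam circx0 subrr.
by rewrite /lam -[circ a (x + y)](addrK a) circ_distr addrACA !addrA.
Qed.

HB.instance Definition _ a :=
  GRing.isNmodMorphism.Build A A (lam a) (lam_nmod_morphism a).

Lemma lamM a b x : lam (circ a b) x = lam a (lam b x).
Proof. by rewrite [lam b x]/lam raddfB /= /lam circA opprB addrA subrK. Qed.

Lemma lam0_id x : lam 0 x = x.
Proof. by rewrite /lam circ0x subr0. Qed.

Lemma lam_inj a : injective (lam a).
Proof.
move=> x y; rewrite /lam => /addIr /(congr1 (circ (cinv a))).
by rewrite !circA circVx !circ0x.
Qed.

End Lambda.

Definition add_pcore (B : brace) (pi : nat_pred) : {group addT B} :=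
  'O_pi([set: addT B])%G.

Section AdditivePcore.
Variables (B : brace) (pi : nat_pred).
Local Notation A := (addT B).
Implicit Types a x : A.
Local Open Scope ring_scope.

Lemma add_nilpotent : nilpotent [set: A].
Proof. exact/abelian_nil/zmod_abelian. Qed.

Lemma mem_add_pcore x : (x \in add_pcore B pi) = (pi.-elt x)%g.
Proof.
apply: (mem_normal_Hall (nilpotent_pcore_Hall _ add_nilpotent)).
  exact: pcore_normal.
exact: in_setT.
Qed.

Lemma order_lam a x : #[lam a x]%g %| #[x]%g.
Proof. by rewrite order_dvdn zmodXgE -raddfMn -zmodXgE expg_order raddf0. Qed.

Lemma lam_add_pcore a x : x \in add_pcore B pi -> lam a x \in add_pcore B pi.
Proof. by rewrite !mem_add_pcore; apply: pnat_dvd; exact: order_lam. Qed.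

Lemma add_pcore_dprod : (add_pcore B pi \x add_pcore B pi^')%g = [set: A].
Proof. exact: nilpotent_pcoreC add_nilpotent. Qed.

End AdditivePcore.

Lemma card_addT (B : brace) : #|{: addT B}| = #|bcar B|.
Proof. by apply: (@bij_eq_card _ _ (fun x : addT B => x : bcar B)); exists id. Qed.

Lemma card_add_pcore (B : brace) (m n : nat) :
    0 < m -> 0 < n -> coprime m n -> #|bcar B| = m * n ->
  #|add_pcore B \pi(m)| = m /\ #|add_pcore B \pi(m)^'| = n.
Proof.
move=> m_gt0 n_gt0 co_mn cardB.
have cardA : #|[set: addT B]| = m * n by rewrite cardsT card_addT.
have pi'_n : \pi(m)^'.-nat n by rewrite -coprime_pi'.
rewrite !(card_Hall (nilpotent_pcore_Hall _ (add_nilpotent B))) cardA !partnM //.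
have pi_m : \pi(m).-nat m := pnat_pi m_gt0.
rewrite (part_pnat_id pi_m) (part_p'nat pi'_n) (part_p'nat _ : m`_\pi(m)^' = 1) ?pnatNK //.
by rewrite (part_pnat_id pi'_n) muln1 mul1n.
Qed.

Section SubBrace.
Variables (B : brace) (S : {group addT B}).
Hypothesis lamS : forall a x, x \in S -> lam a x \in S.
Local Notation A := (addT B).
Local Open Scope ring_scope.

Lemma circS x y : x \in S -> y \in S -> circ x y \in S.
Proof. by move=> Sx Sy; rewrite circE groupD ?lamS. Qed.

Lemma cinvS x : x \in S -> cinv x \in S.
Proof.
move=> Sx; have /eqP : cinv x + lam (cinv x) x = 0 by rewrite -circE circVx.
by rewrite addr_eq0 => /eqP ->; rewrite -zmodVgE groupV lamS.
Qed.

Lemma circ_group_set : group_set [set x : mulT B | (x : A) \in S].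
Proof.
apply/group_setP; split; first by rewrite inE brace1gE group1.
by move=> x y; rewrite !inE; exact: circS.
Qed.

Canonical circ_group := Group circ_group_set.

Lemma expg_card_ideal x : x \in S -> ((x : mulT B) ^+ #|S|)%g = 1%g.
Proof.
have -> : #|S| = #|circ_group| by rewrite cardsE.
by move=> Sx; rewrite expg_cardG // inE.
Qed.

Local Notation sT := {x : A | x \in S}.

Definition sub_add (x y : sT) : sT := Sub (val x + val y) (groupD (valP x) (valP y)).
Definition sub_circ (x y : sT) : sT := Sub (circ (val x) (val y)) (circS (valP x) (valP y)).

Lemma sub_brace_axioms : is_brace sub_add sub_circ.
Proof.
split.
- split; first by move=> x y z; apply: val_inj; rewrite /= addrA.
  split; first by move=> x y; apply: val_inj; rewrite /= addrC.
  exists (Sub 0 (group1 S)); split=> x.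
    by split; apply: val_inj; rewrite /= ?add0r ?addr0.
  by exists (Sub (- val x) (groupVr (valP x))); split; apply: val_inj; rewrite /= ?addrN ?addNr.
- split; first by move=> x y z; apply: val_inj; rewrite /= circA.
  exists (Sub 0 (group1 S)); split=> x.
    by split; apply: val_inj; rewrite /= ?circ0x ?circx0.
  by exists (Sub (cinv (val x)) (cinvS (valP x))); split; apply: val_inj;
    rewrite /= ?circxV ?circVx.
- by move=> x y z; apply: val_inj; rewrite /= circ_distr.
Qed.

Definition sub_brace : brace := Brace sub_brace_axioms.

Lemma card_sub_brace : #|bcar sub_brace| = #|S|.
Proof. exact: card_sig. Qed.

End SubBrace.

Definition solvable_normal_of_order (m n : nat) :=
  forall (gT : finGroupType) (G : {group gT}),
    #|G| = m * n -> solvable G -> exists H : {group gT}, (H <| G)%g /\ #|H| = m.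

Section CoprimeNormal.
Variable gT : finGroupType.
Local Open Scope group_scope.

Lemma normal_coprime_cents (G N H : {group gT}) :
  N <| G -> H <| G -> coprime #|N| #|H| -> N \subset 'C(H).
Proof.
move=> /andP[sNG nNG] /andP[sHG nHG] coNH.
apply/commG1P/trivgP; rewrite -(coprime_TIg coNH).
by apply: commg_subI; rewrite subsetI subxx ?(subset_trans sNG nHG) ?(subset_trans sHG nNG).
Qed.

End CoprimeNormal.

Lemma setX_abelian (gT1 gT2 : finGroupType) (A1 : {set gT1}) (A2 : {set gT2}) :
  abelian A1 -> abelian A2 -> abelian (setX A1 A2).
Proof.
move=> /centsP cA1 /centsP cA2; apply/centsP => [[x1 x2]] /setXP[A1x1 A2x2].
move=> [y1 y2] /setXP[A1y1 A2y2].
change ((x1 * y1, x2 * y2) = (y1 * x1, y2 * x2))%g.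
by rewrite (cA1 _ A1x1 _ A1y1) (cA2 _ A2x2 _ A2y2).
Qed.

(* The factor 'Z_k only pads <[p]> to order m, so that the hypothesis applies
   to a group of order exactly m * #|T|. *)
Section PaddedExtension.
Variables (gT : finGroupType) (T : {group gT}) (p : gT) (m : nat).
Local Open Scope group_scope.
Hypotheses (m_gt0 : 0 < m) (p_m : #[p] %| m) (nTp : p \in 'N(T)).

Let k := m %/ #[p].

Definition pad_base : {group gT * 'Z_k} := setX_group T 1%G.
Definition pad_top : {group gT * 'Z_k} := setX_group <[p]>%G (Zp_group k).

Lemma pad_top_norm : pad_top \subset 'N(pad_base).
Proof.
have nTcp : <[p]> \subset 'N(T) by rewrite cycle_subG.
apply/subsetP => [[y z]] /setXP[py _]; rewrite inE; apply/subsetP => [[u1 u2]].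
rewrite mem_conjg /= !in_setX => /andP[Tu1 u2_1]; apply/andP; split.
  by rewrite -(memJ_norm u1 (groupVr (subsetP nTcp _ py))).
by move: u2_1; rewrite !inE conjg_eq1.
Qed.

Lemma card_pad_base : #|pad_base| = #|T|.
Proof. by rewrite cardsX cards1 muln1. Qed.

Lemma card_pad_top : #|pad_top| = m.
Proof.
have k_gt0 : 0 < k by rewrite divn_gt0 ?order_gt0 // dvdn_leq.
by rewrite cardsX card_Zp // -orderE mulnC divnK.
Qed.

Lemma pad_base_normal : pad_base <| pad_base <*> pad_top.
Proof. by rewrite /normal joing_subl join_subG normG pad_top_norm. Qed.

Lemma card_pad : coprime #|T| m -> #|pad_base <*> pad_top| = (m * #|T|)%N.
Proof.
move=> coTm; rewrite /= (norm_joinEr pad_top_norm) TI_cardMg.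
  by rewrite card_pad_base card_pad_top mulnC.
by apply: coprime_TIg; rewrite card_pad_base card_pad_top.
Qed.

Lemma pad_solvable : solvable T -> solvable (pad_base <*> pad_top).
Proof.
move=> solT; rewrite (series_sol pad_base_normal) /= (norm_joinEr pad_top_norm).
rewrite quotientMidl; apply/andP; split; first by rewrite -morphim_pairg1 morphim_sol.
apply/abelian_sol/quotient_abelian/setX_abelian; first exact: cycle_abelian.
exact: zmod_abelian.
Qed.

End PaddedExtension.

Lemma solvable_normal_cents (gT : finGroupType) (T : {group gT}) (p : gT) (m n : nat) :
    0 < m -> coprime m n -> solvable_normal_of_order m n ->
    solvable T -> #|T| = n -> (p \in 'N(T))%g -> (#[p] %| m)%g ->
  (p \in 'C(T))%g.
Proof.
move=> m_gt0 co_mn hyp solT cardT nTp p_m.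
set G := (pad_base T p m <*> pad_top p m)%G.
have coTm : coprime #|T| m by rewrite cardT coprime_sym.
have [H [nsHG cardH]] : exists H : {group _}, (H <| G)%g /\ #|H| = m.
  by apply: hyp; [rewrite card_pad // cardT | exact: pad_solvable].
have hallH : (\pi(m).-Hall(G) H)%g.
  rewrite /pHall normal_sub //= /pgroup cardH pnat_pi //= -divgS ?normal_sub //.
  by rewrite card_pad // cardH mulKn // -coprime_pi' // cardT.
have pK : (p, 1)%g \in pad_top p m by rewrite in_setX cycle_id group1.
have pH : (p, 1)%g \in H.
  rewrite (mem_normal_Hall hallH nsHG) ?(subsetP (joing_subr _ _)) //.
  by apply: pnat_dvd (order_dvdG pK) _; rewrite card_pad_top // pnat_pi.
have cNH : (pad_base T p m \subset 'C(H))%g.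
  apply: normal_coprime_cents (pad_base_normal m nTp) nsHG _.
  by rewrite card_pad_base cardH cardT coprime_sym.
apply/centP => t Tt; have tN : (t, 1)%g \in pad_base T p m by rewrite in_setX Tt group1.
by have /centP/(_ _ pH)/(congr1 fst) := subsetP cNH _ tN.
Qed.

Section HolomorphElements.
Variable B : brace.
Local Notation A := (addT B).
Implicit Types a b x : A.
Local Open Scope group_scope.

Definition transl b : {perm A} := perm (addIr b).
Definition lamp a : {perm A} := perm (@lam_inj B a).

Lemma translM : {morph transl : b c / b * c}.
Proof. by move=> b c; apply/permP => x; rewrite permM !permE /= addrA. Qed.

Canonical transl_morphism := @Morphism _ _ setT transl (in2W translM).

Lemma transl_injm : 'injm transl.
Proof.
apply/injmP => b c _ _ /permP/(_ 0%R); rewrite !permE /=.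
by rewrite !add0r.
Qed.

Lemma transl_conj a b : transl b ^ lamp a = transl (lam a b).
Proof.
rewrite conjgE; apply: canLR (mulKg (lamp a)) _.
by apply/permP => x; rewrite !permM !permE /= raddfD.
Qed.

Lemma lamp_norm a (S : {group A}) :
  (forall x, x \in S -> lam a x \in S) -> lamp a \in 'N(transl @* S).
Proof.
move=> lamS; rewrite inE; apply/subsetP => _ /imsetP[_ /morphimP[b _ Sb ->] ->].
by rewrite transl_conj mem_morphim ?inE ?lamS.
Qed.

Lemma lampX a k : lamp a ^+ k = lamp ((a : mulT B) ^+ k).
Proof.
elim: k => [|k IHk]; apply/permP => x.
  by rewrite !expg0 perm1 permE /= brace1gE lam0_id.
by rewrite expgSr permM IHk !permE expgS -lamM.
Qed.

End HolomorphElements.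

Section PcoreSplit.
Variables (B : brace) (pi : nat_pred).
Local Notation A := (addT B).
Local Notation Api := (add_pcore B pi).
Local Notation Api' := (add_pcore B pi^').
Implicit Types u v x y : A.
Local Open Scope ring_scope.

Lemma mul_add_pcores : (Api * Api')%g = [set: A].
Proof. exact: dprodW (add_pcore_dprod B pi). Qed.

Definition pi_part x : A := divgr Api Api' x.
Definition pi'_part x : A := remgr Api Api' x.

Lemma mem_pi_part x : pi_part x \in Api.
Proof. by apply: mem_divgr; rewrite mul_add_pcores inE. Qed.

Lemma mem_pi'_part x : pi'_part x \in Api'.
Proof. by apply: mem_remgr; rewrite mul_add_pcores inE. Qed.

Lemma pi_part_split x : x = pi_part x + pi'_part x.
Proof. exact: divgr_eq. Qed.

Lemma add_pcore_TI : (Api :&: Api' = 1)%g.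
Proof. by have /dprodP[] := add_pcore_dprod B pi. Qed.

Lemma pi_part_sum u v : u \in Api -> v \in Api' -> pi_part (u + v) = u.
Proof. exact: (divgrMid add_pcore_TI). Qed.

Lemma pi'_part_sum u v : u \in Api -> v \in Api' -> pi'_part (u + v) = v.
Proof. exact: (remgrMid add_pcore_TI). Qed.

Lemma circ_add_pcore rho x y :
  x \in add_pcore B rho -> y \in add_pcore B rho -> circ x y \in add_pcore B rho.
Proof. exact: (circS (@lam_add_pcore B rho)). Qed.

Definition pcore_brace (rho : nat_pred) : brace := sub_brace (@lam_add_pcore B rho).

Lemma card_pcore_brace rho : #|bcar (pcore_brace rho)| = #|add_pcore B rho|.
Proof. exact: card_sub_brace. Qed.

Definition pcore_act (b : bcar (pcore_brace pi^')) (a : bcar (pcore_brace pi)) :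
  bcar (pcore_brace pi) := Sub (lam (val b) (val a)) (lam_add_pcore _ (valP a)).

Definition pcore_split (x : bcar B) : bcar (pcore_brace pi) * bcar (pcore_brace pi^') :=
  (Sub (pi_part x) (mem_pi_part x), Sub (pi'_part x) (mem_pi'_part x)).

Lemma pcore_split_bij : bijective pcore_split.
Proof.
exists (fun p => (val p.1 + val p.2 : A)) => [x | [u v]]; first by rewrite -pi_part_split.
by congr (_, _); apply: val_inj; rewrite /= ?pi_part_sum ?pi'_part_sum ?(valP u) ?(valP v).
Qed.

Lemma pcore_split_add x y :
  pcore_split (badd x y) = sd_add (pcore_split x) (pcore_split y).
Proof.
have Ex : (badd x y : A) = (pi_part x + pi_part y) + (pi'_part x + pi'_part y).
  by rewrite addrACA -!pi_part_split.
congr (_, _); apply: val_inj; rewrite /= Ex.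
  by rewrite pi_part_sum //; apply: groupD; rewrite ?mem_pi_part ?mem_pi'_part.
by rewrite pi'_part_sum //; apply: groupD; rewrite ?mem_pi_part ?mem_pi'_part.
Qed.

End PcoreSplit.

Section CoprimeBrace.
Variables (B : brace) (m n : nat).
Hypotheses (m_gt0 : 0 < m) (n_gt0 : 0 < n) (co_mn : coprime m n).
Hypothesis cardB : #|bcar B| = m * n.
Hypothesis solvable_normal : solvable_normal_of_order m n.
Local Notation A := (addT B).
Local Notation Am := (add_pcore B \pi(m)).
Local Notation An := (add_pcore B \pi(m)^').
Implicit Types a b c d x y : A.
Local Open Scope ring_scope.

Lemma card_Am : #|Am| = m.
Proof. by have [] := card_add_pcore m_gt0 n_gt0 co_mn cardB. Qed.

Lemma card_An : #|An| = n.
Proof. by have [] := card_add_pcore m_gt0 n_gt0 co_mn cardB. Qed.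

Lemma order_lamp a : a \in Am -> (#[lamp a] %| m)%g.
Proof.
move=> Am_a; have a_m : ((a : mulT B) ^+ m = 1)%g.
  by have := expg_card_ideal (@lam_add_pcore B _) Am_a; rewrite card_Am.
by rewrite order_dvdn lampX a_m -(expg0 (a : mulT B)) -lampX expg0.
Qed.

Lemma lam_Am_An a b : a \in Am -> b \in An -> lam a b = b.
Proof.
move=> Am_a An_b.
have cardT : #|(@transl B @* An)%g| = n by rewrite card_injm ?transl_injm ?subsetT ?card_An.
have solT : solvable (@transl B @* An)%g by rewrite morphim_sol ?abelian_sol ?zmod_abelian.
have := solvable_normal_cents m_gt0 co_mn solvable_normal solT cardT
  (lamp_norm (@lam_add_pcore B _ a)) (order_lamp Am_a).
(* evaluate the commutation of lamp a and transl b at 0 *)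
move/centP/(_ (transl b) (mem_morphim _ (in_setT b) An_b))/permP/(_ 0).
by rewrite !permM !permE /= raddf0 add0r.
Qed.

Lemma circ_Am_An a b : a \in Am -> b \in An -> circ a b = a + b.
Proof. by move=> Am_a An_b; rewrite circE lam_Am_An. Qed.

Lemma lam_An_Am b c : b \in An -> c \in Am -> lam b c = circ b (circ c (cinv b)).
Proof.
move=> An_b Am_c; have An_b' := cinvS (@lam_add_pcore B _) An_b.
by rewrite [circ c _]circ_Am_An // circE raddfD addrCA -circE circxV addr0.
Qed.

Lemma circ_split x y :
  circ x y = circ (pi_part \pi(m) x) (lam (pi'_part \pi(m) x) (pi_part \pi(m) y))
             + circ (pi'_part \pi(m) x) (pi'_part \pi(m) y).
Proof.
set a := pi_part _ x; set b := pi'_part _ x; set c := pi_part _ y; set d := pi'_part _ y.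
(* x = a.b and y = c.d, and a.b.c.d = (a.(b.c.b^-1)).(b.d) *)
have [Am_a An_b Am_c An_d] : [/\ a \in Am, b \in An, c \in Am & d \in An].
  by split; rewrite ?mem_pi_part ?mem_pi'_part.
have Am_alc : circ a (lam b c) \in Am by rewrite circ_add_pcore ?lam_add_pcore.
have An_bd : circ b d \in An by rewrite circ_add_pcore.
rewrite -(circ_Am_An Am_alc An_bd) lam_An_Am // !circA circVK -circA.
by rewrite (circ_Am_An Am_a An_b) (circ_Am_An Am_c An_d) -!pi_part_split.
Qed.

Lemma lam_An_circ b c c' : b \in An -> c \in Am -> c' \in Am ->
  lam b (circ c c') = circ (lam b c) (lam b c').
Proof.
by move=> An_b Am_c Am_c'; rewrite !lam_An_Am ?circ_add_pcore // !circA circVK.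
Qed.

Lemma pcore_act_action : is_brace_action (@pcore_act B \pi(m)).
Proof.
split=> [b | b b' a]; last by apply: val_inj; rewrite /= lamM.
split; first by apply: injF_bij => a a' /(congr1 val) /lam_inj /val_inj.
split=> a a'; apply: val_inj; first by rewrite /= raddfD.
by rewrite /= lam_An_circ // ?(valP a) ?(valP a') ?(valP b).
Qed.

Lemma pcore_split_mul x y :
  pcore_split \pi(m) (bmul x y)
  = sd_mul (@pcore_act B _) (pcore_split \pi(m) x) (pcore_split \pi(m) y).
Proof.
have Am_alc : circ (pi_part \pi(m) x) (lam (pi'_part \pi(m) x) (pi_part \pi(m) y)) \in Am.
  by rewrite circ_add_pcore ?lam_add_pcore ?mem_pi_part.
have An_bd : circ (pi'_part \pi(m) x) (pi'_part \pi(m) y) \in An.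
  by rewrite circ_add_pcore ?mem_pi'_part.
congr (_, _); apply: val_inj; rewrite /= -[bmul x y]/(circ x y) circ_split.
  exact: pi_part_sum.
exact: pi'_part_sum.
Qed.

End CoprimeBrace.

Theorem mainTheorem1 (m n : nat) :
  0 < m -> 0 < n -> coprime m n ->
  (forall (gT : finGroupType) (G : {group gT}),
      #|G| = m * n -> solvable G ->
      exists H : {group gT}, (H <| G)%g /\ #|H| = m) ->
  forall B : brace, #|bcar B| = m * n ->
  exists (B1 B2 : brace) (tau : bcar B2 -> bcar B1 -> bcar B1)
         (f : bcar B -> bcar B1 * bcar B2),
    [/\ #|bcar B1| = m, #|bcar B2| = n, is_brace_action tau & is_sd_iso tau f].
Proof.
move=> m_gt0 n_gt0 co_mn solvable_normal B cardB.
exists (pcore_brace B \pi(m)), (pcore_brace B \pi(m)^'), (@pcore_act B \pi(m)).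
exists (@pcore_split B \pi(m)); split.
- by rewrite card_pcore_brace (card_Am m_gt0 n_gt0 co_mn cardB).
- by rewrite card_pcore_brace (card_An m_gt0 n_gt0 co_mn cardB).
- exact: pcore_act_action m_gt0 n_gt0 co_mn cardB solvable_normal.
- split; first exact: pcore_split_bij.
  split; first exact: pcore_split_add.
  exact: pcore_split_mul m_gt0 n_gt0 co_mn cardB solvable_normal.
Qed.
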